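(* Let $F:\ell^2(\mathbb{Z})\to\ell^2(\mathbb{Z})$ be the bilateral weighted forward shift $Fe_n=w_ne_{n+1}$ ($n\in\mathbb{Z}$), where $w_n=3$ for $n\ge0$ and $w_n=4$ for $n<0$. Let $\mathcal{M}=\{(a_n)_{n\in\mathbb{Z}}\in\ell^2(\mathbb{Z}):a_{2n}=0\text{ for all }n\in\mathbb{Z}\}$. Then $F$ is $\mathcal{M}$-diskcyclic but not $\mathcal{M}$-hypercyclic.
   Context: $(e_n)_{n\in\mathbb{Z}}$ is the canonical orthonormal basis of $\ell^2(\mathbb{Z})$. $\mathbb{D}=\{\alpha\in\mathbb{C}:|\alpha|\le1\}$. An operator $T$ is $\mathcal{M}$-diskcyclic if there is $x$ with $\{\alpha T^nx:\alpha\in\mathbb{D},n\ge0\}\cap\mathcal{M}$ dense in $\mathcal{M}$, and $\mathcal{M}$-hypercyclic if there is $x$ with $\{T^nx:n\ge0\}\cap\mathcal{M}$ dense in $\mathcal{M}$. *)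

From Stdlib Require Import Reals ZArith.
Open Scope R_scope.

(** Complex numbers as R * R (real part, imaginary part). *)
Definition C := (R * R)%type.
Definition Cmul (a b : C) : C :=
  (fst a * fst b - snd a * snd b, fst a * snd b + snd a * fst b).
Definition Csub (a b : C) : C := (fst a - fst b, snd a - snd b).
Definition Czero : C := (0, 0).
Definition RCmul (r : R) (a : C) : C := (r * fst a, r * snd a).
Definition Cnorm2 (z : C) : R := fst z * fst z + snd z * snd z.

Definition seqZ := Z -> C.

Definition psumZ (f : Z -> R) (N : nat) : R :=
  sum_f_R0 (fun i => f (Z.of_nat i - Z.of_nat N)%Z) (2 * N).

(** sum_{k in Z} f k = l  (for nonnegative f, symmetric partial sums suffice). *)
Definition sumZ_is (f : Z -> R) (l : R) : Prop := Un_cv (psumZ f) l.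

Definition in_l2 (a : seqZ) : Prop :=
  exists l, sumZ_is (fun k => Cnorm2 (a k)) l.

Definition l2dist_lt (a b : seqZ) (eps : R) : Prop :=
  exists l, sumZ_is (fun k => Cnorm2 (Csub (a k) (b k))) l /\ sqrt l < eps.

Definition w (n : Z) : R := if (0 <=? n)%Z then 3 else 4.

(** Bilateral weighted forward shift  F e_n = w_n e_{n+1},
    i.e. (F a)_n = w_{n-1} a_{n-1}. *)
Definition Fshift (a : seqZ) : seqZ := fun n => RCmul (w (n - 1)) (a (n - 1)%Z).


Definition scal (alpha : C) (a : seqZ) : seqZ := fun n => Cmul alpha (a n).

Definition inM (a : seqZ) : Prop := in_l2 a /\ forall n : Z, a (2 * n)%Z = Czero.

Definition M_diskcyclic (T : seqZ -> seqZ) (M : seqZ -> Prop) : Prop :=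
  exists x, in_l2 x /\
    forall y, M y -> forall eps, 0 < eps ->
      exists (alpha : C) (n : nat),
        Cnorm2 alpha <= 1 /\ M (scal alpha (Nat.iter n T x)) /\
        l2dist_lt (scal alpha (Nat.iter n T x)) y eps.

Definition M_hypercyclic (T : seqZ -> seqZ) (M : seqZ -> Prop) : Prop :=
  exists x, in_l2 x /\
    forall y, M y -> forall eps, 0 < eps ->
      exists n : nat, M (Nat.iter n T x) /\ l2dist_lt (Nat.iter n T x) y eps.

(** Not hypercyclic: all weights are [>= 1], so [F^n x] has a coordinate at least
    [|x_k|] for every [k]; hence the orbit of [x <> 0] stays away from [0], and
    the orbit of [0] cannot approach [e_1].

    Diskcyclic: writing [w_a = s * pw (a+1) / pw a] with [pw j = q^|j|],
    [q = sqrt(3/4)], [s = 3/q > 1], the disk multiple [s^(-n) F^n] just moves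
    coordinates and rescales them by [pw j / pw (j - n)].  We enumerate a
    countable dense family [tg h] of finitely supported grid sequences in [M]
    (via Cantor pairing) and build [X] by planting [tg h], pre-divided by this
    factor, in a window around [-2 p h] with [p h = 48 * 4^h].  The windows are
    so sparse that [s^(-2 p g) F^(2 p g) X] differs from [tg g] by at most
    [(1/2)^g] times the summable envelope [(7/8)^|j|]. *)

From Pilot Require Import Defs.
From Stdlib Require Import Reals ZArith Lra Lia Psatz Classical ClassicalEpsilon Cantor.
Open Scope R_scope.

(** * Series of nonnegative terms indexed by [Z] *)

Lemma psumZ_S f N :
  psumZ f (S N) = psumZ f N + f (- Z.of_nat (S N))%Z + f (Z.of_nat (S N)).
Proof.
  unfold psumZ.
  replace (2 * S N)%nat with (S (S (2 * N))) by lia.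
  rewrite tech5, (decomp_sum _ (S (2 * N))) by lia.
  rewrite (sum_eq (fun i => f (Z.of_nat (S i) - Z.of_nat (S N))%Z)
                 (fun i => f (Z.of_nat i - Z.of_nat N)%Z))
    by (intros i _; f_equal; lia).
  replace (Z.of_nat 0 - Z.of_nat (S N))%Z with (- Z.of_nat (S N))%Z by lia.
  replace (Z.of_nat (S (S (2 * N))) - Z.of_nat (S N))%Z with (Z.of_nat (S N)) by lia.
  replace (pred (S (2 * N))) with (2 * N)%nat by lia. ring.
Qed.

Lemma psumZ_ext_loc f g N : (forall j, (Z.abs j <= Z.of_nat N)%Z -> f j = g j) ->
  psumZ f N = psumZ g N.
Proof.
  induction N as [|N IH]; intros H.
  - apply H. lia.
  - rewrite !psumZ_S, IH, !H; try lia; [reflexivity|].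
    intros j Hj; apply H; lia.
Qed.

Lemma psumZ_le f g N : (forall j, f j <= g j) -> psumZ f N <= psumZ g N.
Proof.
  intros H; induction N as [|N IH]; [apply H|].
  rewrite !psumZ_S. pose proof (H (- Z.of_nat (S N))%Z). pose proof (H (Z.of_nat (S N))). lra.
Qed.

Lemma psumZ_plus f g N : psumZ (fun j => f j + g j) N = psumZ f N + psumZ g N.
Proof. induction N as [|N IH]; [unfold psumZ; simpl; ring| rewrite !psumZ_S, IH; ring]. Qed.

Lemma psumZ_scal c f N : psumZ (fun j => c * f j) N = c * psumZ f N.
Proof. induction N as [|N IH]; [unfold psumZ; simpl; ring| rewrite !psumZ_S, IH; ring]. Qed.

Lemma psumZ_const c N : psumZ (fun _ => c) N = (2 * INR N + 1) * c.
Proof. induction N as [|N IH]; [unfold psumZ; simpl; ring| rewrite psumZ_S, IH, S_INR; ring]. Qed.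

Section Nonnegative.
Variable f : Z -> R.
Hypothesis f_nonneg : forall j, 0 <= f j.

Lemma psumZ_nonneg N : 0 <= psumZ f N.
Proof.
  induction N as [|N IH]; [apply f_nonneg|rewrite psumZ_S].
  pose proof (f_nonneg (- Z.of_nat (S N))%Z). pose proof (f_nonneg (Z.of_nat (S N))). lra.
Qed.

Lemma psumZ_growing : Un_growing (psumZ f).
Proof.
  intros n. rewrite psumZ_S.
  pose proof (f_nonneg (- Z.of_nat (S n))%Z). pose proof (f_nonneg (Z.of_nat (S n))). lra.
Qed.

Lemma psumZ_le_lim l N : sumZ_is f l -> psumZ f N <= l.
Proof. intros Hl. exact (growing_ineq _ _ psumZ_growing Hl N). Qed.

Lemma term_le_psumZ k N : (Z.abs k <= Z.of_nat N)%Z -> f k <= psumZ f N.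
Proof.
  induction N as [|N IH]; intros Hk.
  - replace k with 0%Z by lia. apply Rle_refl.
  - rewrite psumZ_S. pose proof (psumZ_nonneg N).
    pose proof (f_nonneg (- Z.of_nat (S N))%Z). pose proof (f_nonneg (Z.of_nat (S N))).
    destruct (Z_le_gt_dec (Z.abs k) (Z.of_nat N)) as [Hin|Hout].
    + specialize (IH Hin). lra.
    + destruct (Z_le_gt_dec 0 k).
      * replace k with (Z.of_nat (S N)) by lia. lra.
      * replace k with (- Z.of_nat (S N))%Z by lia. lra.
Qed.

Lemma term_le_lim k l : sumZ_is f l -> f k <= l.
Proof.
  intros Hl. apply Rle_trans with (psumZ f (Z.abs_nat k)).
  - apply term_le_psumZ. lia.
  - now apply psumZ_le_lim.
Qed.

Lemma sumZ_bounded B : (forall N, psumZ f N <= B) -> exists l, sumZ_is f l /\ l <= B.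
Proof.
  intros HB.
  destruct (growing_cv (psumZ f)) as [l Hl].
  - exact psumZ_growing.
  - exists B. intros x [N ->]. apply HB.
  - exists l. split; [exact Hl|].
    destruct (Rle_dec l B) as [|Hn]; [assumption|exfalso].
    destruct (Hl (l - B)) as [N HN]; [lra|].
    specialize (HN N (le_n N)). specialize (HB N). unfold R_dist in HN.
    rewrite Rabs_left1 in HN; lra.
Qed.

Definition tailZ (N : nat) : Z -> R :=
  fun j => if (Z.abs j <=? Z.of_nat N)%Z then 0 else f j.

Lemma psumZ_tail l N M : sumZ_is f l -> psumZ (tailZ N) M <= l - psumZ f N.
Proof.
  intros Hl. pose proof (psumZ_le_lim l N Hl).
  assert (Hhead : forall K, (K <= N)%nat -> psumZ (tailZ N) K = 0).
  { intros K HK. rewrite (psumZ_ext_loc _ (fun _ => 0 * 0)), psumZ_scal; [ring|].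
    intros j Hj. unfold tailZ. replace (Z.abs j <=? Z.of_nat N)%Z with true; [ring|].
    symmetry; apply Z.leb_le; lia. }
  destruct (le_lt_dec N M) as [HM|HM]; [|rewrite Hhead by lia; lra].
  assert (psumZ (tailZ N) M = psumZ f M - psumZ f N) as ->.
  { induction HM as [|M HM IH]; [rewrite Hhead by lia; ring|].
    rewrite !psumZ_S, IH. unfold tailZ.
    replace (Z.abs (- Z.of_nat (S M)) <=? Z.of_nat N)%Z with false
      by (symmetry; apply Z.leb_gt; lia).
    replace (Z.abs (Z.of_nat (S M)) <=? Z.of_nat N)%Z with false
      by (symmetry; apply Z.leb_gt; lia).
    ring. }
  pose proof (psumZ_le_lim l M Hl). lra.
Qed.

Lemma sumZ_tail_small l e : sumZ_is f l -> 0 < e -> exists N, l - psumZ f N < e.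
Proof.
  intros Hl He. destruct (Hl e He) as [N HN]. exists N.
  specialize (HN N (le_n N)). pose proof (psumZ_le_lim l N Hl).
  unfold R_dist in HN. rewrite Rabs_left1 in HN; lra.
Qed.

End Nonnegative.

Lemma sumZ_finite f N0 : (forall j, (Z.of_nat N0 < Z.abs j)%Z -> f j = 0) ->
  sumZ_is f (psumZ f N0).
Proof.
  intros H eps Heps. exists N0. intros n Hn. unfold R_dist.
  assert (psumZ f n = psumZ f N0) as ->.
  { induction Hn as [|n Hn IH]; [reflexivity|]. rewrite psumZ_S, IH, !H by lia. ring. }
  rewrite Rminus_diag, Rabs_R0; lra.
Qed.

Lemma psumZ_indicator c N M : 0 <= c ->
  psumZ (fun k => if (Z.abs k <=? Z.of_nat N)%Z then c else 0) M <= (2 * INR N + 1) * c.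
Proof.
  intros Hc. set (f := fun k => if (Z.abs k <=? Z.of_nat N)%Z then c else 0).
  assert (Hf : forall j, 0 <= f j) by (intros; unfold f; destruct (_ <=? _)%Z; lra).
  assert (Hfin : sumZ_is f (psumZ f N)).
  { apply sumZ_finite. intros j Hj. unfold f.
    replace (Z.abs j <=? Z.of_nat N)%Z with false; [reflexivity|].
    symmetry; apply Z.leb_gt; lia. }
  eapply Rle_trans; [apply (psumZ_le_lim f Hf _ M Hfin)|].
  rewrite (psumZ_ext_loc f (fun _ => c)); [rewrite psumZ_const; lra|].
  intros j Hj. unfold f. replace (Z.abs j <=? Z.of_nat N)%Z with true; [reflexivity|].
  symmetry; apply Z.leb_le; lia.
Qed.

(** The summable envelope [(7/8)^|j|], whose total sum is [15]; all error terms
    in the construction below are multiples of it. *)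
Definition Env (j : Z) : R := (7/8) ^ (Z.abs_nat j).

Lemma Env_pos j : 0 < Env j.
Proof. unfold Env; apply pow_lt; lra. Qed.

Lemma psumZ_Env N : psumZ Env N = 15 - 14 * (7/8)^N.
Proof.
  induction N as [|N IH]; [unfold psumZ, Env; simpl; lra|].
  rewrite psumZ_S, IH. unfold Env.
  replace (Z.abs_nat (- Z.of_nat (S N))) with (S N) by lia.
  replace (Z.abs_nat (Z.of_nat (S N))) with (S N) by lia.
  rewrite <- tech_pow_Rmult. lra.
Qed.

Lemma psumZ_Env_le N : psumZ Env N <= 15.
Proof. rewrite psumZ_Env. pose proof (pow_le (7/8) N). lra. Qed.

Lemma Cnorm2_nonneg z : 0 <= Cnorm2 z.
Proof. unfold Cnorm2. nra. Qed.

Lemma Cnorm2_RCmul c z : Cnorm2 (RCmul c z) = c * c * Cnorm2 z.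
Proof. unfold Cnorm2, RCmul; simpl; ring. Qed.

Lemma RCmul_RCmul a b v : RCmul a (RCmul b v) = RCmul (a * b) v.
Proof. unfold RCmul; simpl; f_equal; ring. Qed.

Lemma RCmul_1 v : RCmul 1 v = v.
Proof. destruct v; unfold RCmul; simpl; f_equal; ring. Qed.

Lemma RCmul_0 c : RCmul c Czero = Czero.
Proof. unfold RCmul, Czero; simpl; f_equal; ring. Qed.

Lemma Cnorm2_sub0 z : Cnorm2 (Csub z Czero) = Cnorm2 z.
Proof. unfold Cnorm2, Csub, Czero; simpl; ring. Qed.

Lemma Cnorm2_0sub z : Cnorm2 (Csub Czero z) = Cnorm2 z.
Proof. unfold Cnorm2, Csub, Czero; simpl; ring. Qed.

Lemma Cnorm2_Csub_tri a b c :
  Cnorm2 (Csub a c) <= 2 * Cnorm2 (Csub a b) + 2 * Cnorm2 (Csub b c).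
Proof.
  destruct a as [a1 a2], b as [b1 b2], c as [c1 c2]. unfold Cnorm2, Csub; simpl.
  pose proof (Rle_0_sqr (a1 - 2*b1 + c1)). pose proof (Rle_0_sqr (a2 - 2*b2 + c2)).
  unfold Rsqr in *. nra.
Qed.

Lemma psumZ_Csub_tri (a b c : seqZ) N :
  psumZ (fun k => Cnorm2 (Csub (a k) (c k))) N <=
  2 * psumZ (fun k => Cnorm2 (Csub (a k) (b k))) N
  + 2 * psumZ (fun k => Cnorm2 (Csub (b k) (c k))) N.
Proof.
  rewrite <- !psumZ_scal, <- psumZ_plus. apply psumZ_le. intros k. apply Cnorm2_Csub_tri.
Qed.

Lemma l2dist_lt_coord a b eps k :
  l2dist_lt a b eps -> Cnorm2 (Csub (a k) (b k)) < eps * eps.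
Proof.
  intros [l [Hl Hsl]].
  pose proof (term_le_lim _ (fun j => Cnorm2_nonneg _) k l Hl) as Hk.
  pose proof (Cnorm2_nonneg (Csub (a k) (b k))).
  pose proof (sqrt_sqrt l ltac:(lra)). pose proof (sqrt_pos l). nra.
Qed.

Lemma l2dist_lt_of_bound a b B eps : 0 < eps -> B < eps * eps ->
  (forall N, psumZ (fun k => Cnorm2 (Csub (a k) (b k))) N <= B) -> l2dist_lt a b eps.
Proof.
  intros Heps HB Hsum.
  destruct (sumZ_bounded _ (fun j => Cnorm2_nonneg _) B Hsum) as [L [HL HLB]].
  exists L. split; [exact HL|].
  set (f := fun j => Cnorm2 (Csub (a j) (b j))).
  pose proof (psumZ_le_lim f (fun j => Cnorm2_nonneg _) L 0 HL).
  pose proof (psumZ_nonneg f (fun j => Cnorm2_nonneg _) 0).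
  rewrite <- (sqrt_square eps) by lra. apply sqrt_lt_1_alt. lra.
Qed.

(** * [F] is not [M]-hypercyclic *)

(** All weights are [>= 1], so [F^n] never shrinks a coordinate (it moves it [n] steps). *)
Lemma w_ge1 n : 1 <= w n.
Proof. unfold w. destruct (0 <=? n)%Z; lra. Qed.

Lemma iter_Fshift_expanding n a j :
  Cnorm2 (a j) <= Cnorm2 (Nat.iter n Fshift a (j + Z.of_nat n)%Z).
Proof.
  revert j; induction n as [|n IH]; intros j.
  - simpl. replace (j + 0)%Z with j by lia. apply Rle_refl.
  - rewrite Nat2Z.inj_succ. simpl Nat.iter. unfold Fshift at 1. rewrite Cnorm2_RCmul.
    replace (j + Z.succ (Z.of_nat n) - 1)%Z with (j + Z.of_nat n)%Z by lia.
    specialize (IH j). pose proof (w_ge1 (j + Z.of_nat n)).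
    pose proof (Cnorm2_nonneg (Nat.iter n Fshift a (j + Z.of_nat n)%Z)).
    assert (1 <= w (j + Z.of_nat n)%Z * w (j + Z.of_nat n)%Z) by nra. nra.
Qed.

Lemma iter_Fshift_zero n a j : (forall k, a k = Czero) -> Nat.iter n Fshift a j = Czero.
Proof.
  intros Ha. revert j; induction n as [|n IH]; intros j; [apply Ha|].
  simpl Nat.iter. unfold Fshift at 1. rewrite IH. apply RCmul_0.
Qed.

Lemma zero_inM : inM (fun _ => Czero).
Proof.
  split; [|reflexivity]. exists (psumZ (fun k => Cnorm2 Czero) 0).
  apply sumZ_finite. intros. unfold Cnorm2, Czero; simpl; ring.
Qed.

Definition e1 : seqZ := fun j => if (j =? 1)%Z then (1, 0) else Czero.

Lemma e1_inM : inM e1.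
Proof.
  split.
  - exists (psumZ (fun k => Cnorm2 (e1 k)) 1). apply sumZ_finite.
    intros j Hj. unfold e1. replace (j =? 1)%Z with false by (symmetry; apply Z.eqb_neq; lia).
    unfold Cnorm2, Czero; simpl; ring.
  - intros n. unfold e1. replace (2 * n =? 1)%Z with false by (symmetry; apply Z.eqb_neq; lia).
    reflexivity.
Qed.

(** The orbit of [0] cannot approach [e_1], and the orbit of [x <> 0] stays at
    distance [>= |x_k|] from [0], since [F] is expanding. *)
Lemma F_not_hypercyclic : ~ M_hypercyclic Fshift inM.
Proof.
  intros [x [_ Hdense]].
  destruct (classic (forall k, x k = Czero)) as [Hzero|[k Hk]%not_all_ex_not].
  - destruct (Hdense e1 e1_inM (1/2)) as [n [_ Hclose]]; [lra|].
    pose proof (l2dist_lt_coord _ _ _ 1%Z Hclose) as Hc.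
    rewrite iter_Fshift_zero in Hc by exact Hzero.
    unfold Cnorm2, Csub, Czero, e1 in Hc; simpl in Hc. lra.
  - assert (Hpos : 0 < Cnorm2 (x k)).
    { destruct (x k) as [a b] eqn:E. unfold Cnorm2; simpl.
      destruct (Req_dec a 0), (Req_dec b 0); subst; [now elim Hk|nra..]. }
    destruct (Hdense _ zero_inM (sqrt (Cnorm2 (x k)))) as [n [_ Hclose]].
    { now apply sqrt_lt_R0. }
    pose proof (l2dist_lt_coord _ _ _ (k + Z.of_nat n)%Z Hclose) as Hc.
    rewrite Cnorm2_sub0, sqrt_sqrt in Hc by lra.
    pose proof (iter_Fshift_expanding n x k). lra.
Qed.

(** * [F] as a rescaled conjugate of the unweighted shift

    With [q = sqrt(3/4)], [s = 3/q] and [pw j = q^|j|] one has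
    [w_a = s * pw (a+1) / pw a], hence [F^n] multiplies the coordinate moved
    from [j - n] to [j] by [s^n * pw j / pw (j - n)]. *)

Definition q : R := sqrt (3/4).

Lemma q_pos : 0 < q.
Proof. unfold q; apply sqrt_lt_R0; lra. Qed.

Lemma q_sq : q * q = 3/4.
Proof. unfold q; apply sqrt_sqrt; lra. Qed.

Definition s : R := 3 / q.

(** [s > 1], so the disk multiples [s^(-n)] are admissible. *)
Lemma s_ge3 : 3 <= s.
Proof.
  pose proof q_pos. pose proof q_sq. assert (q <= 1) by nra.
  unfold s. apply (Rmult_le_reg_r q); [lra|]. unfold Rdiv. rewrite Rmult_assoc, Rinv_l; nra.
Qed.

Definition pw (j : Z) : R := q ^ Z.abs_nat j.

Lemma pw_pos j : 0 < pw j.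
Proof. unfold pw; apply pow_lt, q_pos. Qed.

Lemma w_as_ratio a : w a = s * (pw (a + 1) / pw a).
Proof.
  pose proof q_pos. pose proof q_sq. unfold w, pw, s.
  destruct (0 <=? a)%Z eqn:E.
  - apply Z.leb_le in E. replace (Z.abs_nat (a + 1)) with (S (Z.abs_nat a)) by lia.
    simpl. pose proof (pow_lt q (Z.abs_nat a) H). field. lra.
  - apply Z.leb_gt in E. replace (Z.abs_nat a) with (S (Z.abs_nat (a + 1))) by lia.
    simpl. pose proof (pow_lt q (Z.abs_nat (a + 1)) H).
    replace (3 / q * (q ^ Z.abs_nat (a + 1) / (q * q ^ Z.abs_nat (a + 1))))
      with (3 / (q * q)) by (field; lra).
    rewrite H0. lra.
Qed.

(** Telescoping the weights: the closed form of [F^n]. *)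
Lemma iter_Fshift_formula n a j : Nat.iter n Fshift a j =
  RCmul (s ^ n * (pw j / pw (j - Z.of_nat n))) (a (j - Z.of_nat n)%Z).
Proof.
  revert j; induction n as [|n IH]; intros j.
  - simpl. replace (j - 0)%Z with j by lia. pose proof (pw_pos j).
    replace (1 * (pw j / pw j)) with 1 by (field; lra). now rewrite RCmul_1.
  - simpl Nat.iter. unfold Fshift at 1. rewrite IH, RCmul_RCmul, w_as_ratio.
    replace (j - 1 + 1)%Z with j by lia.
    replace (j - 1 - Z.of_nat n)%Z with (j - Z.of_nat (S n))%Z by lia.
    f_equal. pose proof (pw_pos j). pose proof (pw_pos (j - 1)).
    pose proof (pw_pos (j - Z.of_nat (S n))).
    rewrite <- tech_pow_Rmult. field. split; lra.
Qed.

(** * A countable dense family of targets in [M]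

    A natural number [t] is read as an infinite stream of digits by repeated
    Cantor unpairing; a digit [d] in turn codes the grid point
    [(u - v)/(m+1)] where [d] unpairs to [(u, v)].  The target [target m t] is
    supported on the odd indices of [-m, m] and reads its real and imaginary
    parts off consecutive digits of [t]. *)

Lemma of_nat_sum n : (fst (Cantor.of_nat n) + snd (Cantor.of_nat n) <= n)%nat.
Proof.
  pose proof (cancel_to_of n) as E. destruct (Cantor.of_nat n) as [x y]. simpl.
  pose proof (to_nat_non_decreasing x y). lia.
Qed.

Definition stream_tail (u : nat) : nat := snd (Cantor.of_nat u).
Definition digit (n t : nat) : nat := fst (Cantor.of_nat (Nat.iter n stream_tail t)).

(** Digits are bounded by the code; this bounds the size of the targets. *)
Lemma digit_le n t : (digit n t <= t)%nat.
Proof.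
  unfold digit. pose proof (of_nat_sum (Nat.iter n stream_tail t)).
  enough (Nat.iter n stream_tail t <= t)%nat by lia.
  induction n as [|n IH]; simpl; [lia|]. unfold stream_tail at 1.
  pose proof (of_nat_sum (Nat.iter n stream_tail t)). lia.
Qed.

Lemma digits_realizable L (c : nat -> nat) :
  exists t, forall n, (n < L)%nat -> digit n t = c n.
Proof.
  revert c; induction L as [|L IH]; intros c.
  - exists 0%nat. intros; lia.
  - destruct (IH (fun n => c (S n))) as [t' Ht'].
    exists (Cantor.to_nat (c 0%nat, t')). intros [|n] Hn; unfold digit.
    + change (Nat.iter 0 stream_tail ?x) with x. now rewrite cancel_of_to.
    + rewrite Nat.iter_succ_r. unfold stream_tail at 2. rewrite cancel_of_to.
      apply (Ht' n). lia.
Qed.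

Definition grid (m d : nat) : R :=
  (INR (fst (Cantor.of_nat d)) - INR (snd (Cantor.of_nat d))) / INR (S m).

Lemma INR_S_ge1 m : 1 <= INR (S m).
Proof. rewrite S_INR. pose proof (pos_INR m). lra. Qed.

Lemma grid_0 m : grid m 0 = 0.
Proof. unfold grid. simpl. unfold Rdiv. ring. Qed.

Lemma grid_sq m d : grid m d * grid m d <= INR d * INR d.
Proof.
  unfold grid. pose proof (of_nat_sum d). pose proof (INR_S_ge1 m).
  destruct (Cantor.of_nat d) as [u v]; cbn [fst snd] in *.
  set (M := INR (S m)) in *.
  apply le_INR in H. rewrite plus_INR in H. pose proof (pos_INR u). pose proof (pos_INR v).
  set (a := INR u - INR v).
  assert (- INR d <= a <= INR d) by (unfold a; lra).
  assert (0 < / M <= 1).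
  { split; [apply Rinv_0_lt_compat; lra| rewrite <- Rinv_1; apply Rinv_le_contravar; lra]. }
  replace (a / M * (a / M)) with (a * a * (/ M * / M)) by (field; lra).
  assert (0 <= / M * / M <= 1) by nra. assert (a * a <= INR d * INR d) by nra. nra.
Qed.

Definition grid_code (m : nat) (r : R) : nat :=
  Cantor.to_nat (Z.to_nat (up (r * INR (S m))), Z.to_nat (- up (r * INR (S m)))).

Lemma INR_IZR_split z : INR (Z.to_nat z) - INR (Z.to_nat (- z)) = IZR z.
Proof.
  rewrite !INR_IZR_INZ. destruct (Z_le_gt_dec 0 z).
  - rewrite Z2Nat.id by lia. replace (Z.to_nat (-z)) with 0%nat by lia. simpl. lra.
  - replace (Z.to_nat z) with 0%nat by lia. rewrite Z2Nat.id by lia. simpl.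
    rewrite opp_IZR. lra.
Qed.

Lemma grid_approx m r : (r - grid m (grid_code m r)) ^ 2 <= 1 / INR (S m).
Proof.
  unfold grid, grid_code. rewrite cancel_of_to. cbn [fst snd]. rewrite INR_IZR_split.
  pose proof (INR_S_ge1 m). set (M := INR (S m)) in *.
  destruct (archimed (r * M)) as [H1 H2].
  set (z := IZR (up (r * M))) in *.
  replace ((r - z / M)^2) with ((r * M - z)^2 * (/ M * / M)) by (field; lra).
  assert ((r * M - z)^2 <= 1) by (simpl; nra).
  assert (0 < / M <= 1).
  { split; [apply Rinv_0_lt_compat; lra| rewrite <- Rinv_1; apply Rinv_le_contravar; lra]. }
  pose proof (pow2_ge_0 (r * M - z)).
  unfold Rdiv. rewrite Rmult_1_l. nra.
Qed.

Definition target (m t : nat) : seqZ := fun k =>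
  if ((Z.abs k <=? Z.of_nat m)%Z && Z.odd k)%bool then
    (grid m (digit (2 * Z.to_nat (k + Z.of_nat m)) t),
     grid m (digit (S (2 * Z.to_nat (k + Z.of_nat m))) t))
  else Czero.

Lemma target_bound m t k : Cnorm2 (target m t k) <= 2 * INR t ^ 2.
Proof.
  assert (Hdig : forall n, grid m (digit n t) * grid m (digit n t) <= INR t * INR t).
  { intros n. pose proof (grid_sq m (digit n t)).
    pose proof (le_INR _ _ (digit_le n t)). pose proof (pos_INR (digit n t)). nra. }
  replace (INR t ^ 2) with (INR t * INR t) by ring.
  unfold target. destruct (_ && _)%bool; unfold Cnorm2; cbn [fst snd].
  - pose proof (Hdig (2 * Z.to_nat (k + Z.of_nat m))%nat).
    pose proof (Hdig (S (2 * Z.to_nat (k + Z.of_nat m)))). lra.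
  - unfold Czero; cbn [fst snd]. pose proof (pos_INR t). nra.
Qed.

(** The [h]-th target: [h] unpairs to [((m, t), b)]; the padding component [b]
    lets every target occur with arbitrarily large index [h]. *)
Definition tg (h : nat) : seqZ :=
  target (fst (Cantor.of_nat (fst (Cantor.of_nat h))))
         (snd (Cantor.of_nat (fst (Cantor.of_nat h)))).

Lemma tg_pair m t b : tg (Cantor.to_nat (Cantor.to_nat (m, t), b)) = target m t.
Proof. unfold tg. rewrite cancel_of_to. cbn [fst]. now rewrite cancel_of_to. Qed.

Lemma tg_bound h k : Cnorm2 (tg h k) <= 2 * 4 ^ h.
Proof.
  unfold tg. eapply Rle_trans; [apply target_bound|].
  set (t := snd _).
  assert (Ht : (t <= h)%nat).
  { unfold t. pose proof (of_nat_sum (fst (Cantor.of_nat h))). pose proof (of_nat_sum h). lia. }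
  assert (Hh : (h <= 2 ^ h)%nat) by (pose proof (Nat.pow_gt_lin_r 2 h ltac:(lia)); lia).
  apply le_INR in Ht. apply le_INR in Hh. rewrite pow_INR in Hh.
  replace (INR 2) with 2 in Hh by (simpl; lra).
  pose proof (pos_INR t).
  replace (4 ^ h) with (2 ^ h * 2 ^ h) by (rewrite <- Rpow_mult_distr; f_equal; lra).
  replace (INR t ^ 2) with (INR t * INR t) by ring.
  assert (INR t <= 2 ^ h) by lra. nra.
Qed.

Lemma tg_out h k : (Z.of_nat h < Z.abs k)%Z -> tg h k = Czero.
Proof.
  intros Hk. unfold tg, target.
  pose proof (of_nat_sum (fst (Cantor.of_nat h))). pose proof (of_nat_sum h).
  replace (Z.abs k <=? _)%Z with false; [reflexivity|]. symmetry; apply Z.leb_gt. lia.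
Qed.

Lemma tg_even h n : tg h (2 * n)%Z = Czero.
Proof. unfold tg, target. rewrite Z.odd_mul. simpl. now rewrite Bool.andb_false_r. Qed.

(** The digits making [target m t] the grid approximation of [y] on [-N, N]:
    digit [2i] (resp. [2i+1]) codes the real (resp. imaginary) part of [y] at
    index [i - m]. *)
Definition target_digits (y : seqZ) (m N : nat) (n : nat) : nat :=
  let k := (Z.of_nat (n / 2) - Z.of_nat m)%Z in
  if (Z.abs k <=? Z.of_nat N)%Z
  then grid_code m (if Nat.even n then fst (y k) else snd (y k)) else 0%nat.

Lemma target_on_window y m N t k : (N <= m)%nat ->
  (forall n, (n < 2 * (2 * m + 1) + 2)%nat -> digit n t = target_digits y m N n) ->
  (Z.abs k <= Z.of_nat m)%Z -> Z.odd k = true ->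
  target m t k = if (Z.abs k <=? Z.of_nat N)%Z
                 then (grid m (grid_code m (fst (y k))), grid m (grid_code m (snd (y k))))
                 else Czero.
Proof.
  intros HNm Hd Hk Ho. unfold target.
  replace (Z.abs k <=? Z.of_nat m)%Z with true by (symmetry; apply Z.leb_le; lia).
  rewrite Ho. simpl andb.
  set (i := Z.to_nat (k + Z.of_nat m)).
  rewrite !Hd by (unfold i; lia). unfold target_digits.
  replace (2 * i / 2)%nat with i by (apply Nat.div_unique with 0%nat; lia).
  replace (S (2 * i) / 2)%nat with i
    by (apply Nat.div_unique with 1%nat; lia).
  replace (Z.of_nat i - Z.of_nat m)%Z with k by (unfold i; lia).
  rewrite Nat.even_succ, Nat.odd_mul, Nat.even_mul. simpl.
  destruct (Z.abs k <=? Z.of_nat N)%Z; [reflexivity|]. now rewrite grid_0.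
Qed.

Lemma target_coord_error y m N t k : (forall n, y (2 * n)%Z = Czero) -> (N <= m)%nat ->
  (forall n, (n < 2 * (2 * m + 1) + 2)%nat -> digit n t = target_digits y m N n) ->
  Cnorm2 (Csub (target m t k) (y k)) <=
    (if (Z.abs k <=? Z.of_nat N)%Z then 2 / INR (S m) else 0)
    + tailZ (fun k => Cnorm2 (y k)) N k.
Proof.
  intros Hev HNm Hd. pose proof (INR_S_ge1 m).
  assert (Hres : 0 <= 2 / INR (S m)) by (apply Rle_mult_inv_pos; lra).
  unfold tailZ. destruct (Z.odd k) eqn:Ho.
  - destruct (Z_le_gt_dec (Z.abs k) (Z.of_nat m)) as [Hk|Hk].
    + rewrite (target_on_window y m N t k HNm Hd Hk Ho).
      destruct (Z.abs k <=? Z.of_nat N)%Z; [|rewrite Cnorm2_0sub; lra].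
      pose proof (grid_approx m (fst (y k))) as A1. pose proof (grid_approx m (snd (y k))) as A2.
      destruct (y k) as [a b]. unfold Cnorm2, Csub; cbn [fst snd] in *.
      replace (2 / INR (S m)) with (1 / INR (S m) + 1 / INR (S m)) by (field; lra).
      nra.
    + unfold target.
      replace (Z.abs k <=? Z.of_nat m)%Z with false by (symmetry; apply Z.leb_gt; lia).
      replace (Z.abs k <=? Z.of_nat N)%Z with false by (symmetry; apply Z.leb_gt; lia).
      simpl andb. rewrite Cnorm2_0sub. lra.
  - unfold target. rewrite Ho, Bool.andb_false_r.
    rewrite (Z.div2_odd k), Ho, Z.add_0_r, Hev.
    replace (Cnorm2 (Csub Czero Czero)) with 0 by (unfold Cnorm2, Csub, Czero; simpl; ring).
    replace (Cnorm2 Czero) with 0 by (unfold Cnorm2, Czero; simpl; ring).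
    destruct (_ <=? _)%Z; lra.
Qed.

Lemma resolution_exists N e : 0 < e ->
  exists m, (N <= m)%nat /\ (2 * INR N + 1) * (2 / INR (S m)) < e.
Proof.
  intros He. set (X0 := 2 * (2 * INR N + 1) / e).
  assert (HX0 : 0 < X0) by (unfold X0; pose proof (pos_INR N); apply Rdiv_lt_0_compat; lra).
  destruct (archimed X0) as [Hz _].
  set (m := Nat.max N (Z.to_nat (up X0))).
  exists m. split; [unfold m; lia|].
  assert (HM : X0 < INR (S m)).
  { rewrite S_INR. assert (Hle : (Z.to_nat (up X0) <= m)%nat) by (unfold m; lia).
    apply le_INR in Hle. rewrite INR_IZR_INZ, Z2Nat.id in Hle; [lra|].
    apply le_IZR. lra. }
  pose proof (INR_S_ge1 m). set (M := INR (S m)) in *. unfold X0 in HM.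
  apply (Rmult_lt_reg_r M); [lra|].
  replace ((2 * INR N + 1) * (2 / M) * M) with (2 * (2 * INR N + 1)) by (field; lra).
  apply (Rmult_lt_reg_r (/ e)); [apply Rinv_0_lt_compat; lra|].
  replace (2 * (2 * INR N + 1) * / e) with (2 * (2 * INR N + 1) / e) by (unfold Rdiv; ring).
  replace (e * M * / e) with M by (field; lra). exact HM.
Qed.

Lemma tg_dense y e B : inM y -> 0 < e -> exists g, (B <= g)%nat /\
  forall K, psumZ (fun k => Cnorm2 (Csub (tg g k) (y k))) K <= e.
Proof.
  intros [[l Hl] Hev] He.
  set (f := fun k => Cnorm2 (y k)).
  assert (Hf : forall j, 0 <= f j) by (intros; apply Cnorm2_nonneg).
  destruct (sumZ_tail_small f Hf l (e / 2) Hl ltac:(lra)) as [N HN].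
  destruct (resolution_exists N (e / 2) ltac:(lra)) as [m [HNm Hm]].
  destruct (digits_realizable (2 * (2 * m + 1) + 2) (target_digits y m N)) as [t Ht].
  exists (Cantor.to_nat (Cantor.to_nat (m, t), B)). split.
  { pose proof (to_nat_non_decreasing (Cantor.to_nat (m, t)) B). lia. }
  intros K. rewrite tg_pair.
  eapply Rle_trans.
  { apply psumZ_le. intros k. exact (target_coord_error y m N t k Hev HNm Ht). }
  rewrite psumZ_plus.
  pose proof (psumZ_indicator (2 / INR (S m)) N K
                ltac:(pose proof (INR_S_ge1 m); apply Rle_mult_inv_pos; lra)).
  pose proof (psumZ_tail f Hf l N K Hl). fold f. lra.
Qed.

(** * The diskcyclic vector

    Target [tg h] is planted in the window of radius [h] around [-2 p h],
    divided by the transport factor of [F^(2 p h)], so that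
    [s^(-2 p h) F^(2 p h) X] equals [tg h] up to an error [(1/2)^h * Env].
    The windows are far apart, and [pw] decays geometrically, so the other
    planted blocks contribute only that small error. *)

Definition p (h : nat) : nat := (48 * 4 ^ h)%nat.

Definition InWin (h : nat) (i : Z) : Prop :=
  (Z.abs (i + 2 * Z.of_nat (p h)) <= Z.of_nat h)%Z.

Lemma pow4_lin h : (h < 4 ^ h)%nat.
Proof. apply Nat.pow_gt_lin_r; lia. Qed.

Lemma pow4_mono g h : (g < h)%nat -> (4 * 4 ^ g <= 4 ^ h)%nat.
Proof. intros H. change (4 * 4 ^ g)%nat with (4 ^ S g)%nat. apply Nat.pow_le_mono_r; lia. Qed.

Lemma windows_disjoint g h i : InWin g i -> InWin h i -> g = h.
Proof.
  unfold InWin, p. intros Hg Hh. pose proof (pow4_lin g). pose proof (pow4_lin h).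
  destruct (lt_eq_lt_dec g h) as [[Hlt|Heq]|Hlt]; auto.
  - pose proof (pow4_mono g h Hlt). lia.
  - pose proof (pow4_mono h g Hlt). lia.
Qed.

Lemma window_shift_far g h k : g <> h -> (Z.abs k <= Z.of_nat h)%Z ->
  (Z.of_nat (p (Nat.max g h)) <= Z.abs (k + 2 * Z.of_nat (p g) - 2 * Z.of_nat (p h)))%Z.
Proof.
  unfold p. intros Hne Hk. pose proof (pow4_lin g). pose proof (pow4_lin h).
  destruct (lt_eq_lt_dec g h) as [[Hlt|Heq]|Hlt]; [|lia|].
  - rewrite Nat.max_r by lia. pose proof (pow4_mono g h Hlt). lia.
  - rewrite Nat.max_l by lia. pose proof (pow4_mono h g Hlt). lia.
Qed.

Lemma window_far h k : (Z.abs k <= Z.of_nat h)%Z ->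
  (Z.of_nat (p h) <= Z.abs (k - 2 * Z.of_nat (p h)))%Z.
Proof. unfold p. intros. pose proof (pow4_lin h). lia. Qed.

Lemma pow_antitone x a b : 0 <= x <= 1 -> (b <= a)%nat -> x ^ a <= x ^ b.
Proof.
  intros Hx Hab. replace a with (b + (a - b))%nat by lia. rewrite pow_add.
  assert (x ^ (a - b) <= 1).
  { induction (a - b)%nat as [|n IH]; simpl; [lra|]. pose proof (pow_le x n). nra. }
  pose proof (pow_le x b). pose proof (pow_le x (a - b)). nra.
Qed.

(** The gap [p H] beats the growth [2 (16/3)^H] of the targets and transport. *)
Lemma window_decay H : (6/7) ^ (p H) * (2 * (16/3) ^ H) <= (/2) ^ H.
Proof.
  unfold p. replace (48 * 4 ^ H)%nat with (6 * (8 * 4 ^ H))%nat by lia.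
  rewrite pow_mult.
  assert (0 <= (6/7)^6 <= /2) by (simpl; lra).
  assert (((6/7)^6) ^ (8 * 4^H) <= (/2) ^ (8 * 4 ^ H)) by (apply pow_incr; lra).
  assert ((/2) ^ (8 * 4 ^ H) <= (/2) ^ (5 * H + 1)).
  { apply pow_antitone; [lra|]. pose proof (pow4_lin H). lia. }
  assert ((/2) ^ (5 * H + 1) * (2 * (16/3) ^ H) = (/6) ^ H).
  { rewrite pow_add, pow_mult, pow_1.
    replace (((/2) ^ 5) ^ H * / 2 * (2 * (16 / 3) ^ H)) with (((/2)^5) ^ H * (16/3)^H) by field.
    rewrite <- Rpow_mult_distr. f_equal. simpl. field. }
  assert ((/6) ^ H <= (/2) ^ H) by (apply pow_incr; lra).
  assert (0 <= 2 * (16/3)^H) by (pose proof (pow_le (16/3) H); lra).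
  nra.
Qed.

Lemma pw_ratio_sq j k :
  pw j / pw k * (pw j / pw k) = Env j * ((6/7) ^ Z.abs_nat j * (4/3) ^ Z.abs_nat k).
Proof.
  pose proof q_pos. pose proof (pow_lt q (Z.abs_nat k) H). unfold pw, Env.
  replace (q ^ Z.abs_nat j / q ^ Z.abs_nat k * (q ^ Z.abs_nat j / q ^ Z.abs_nat k))
    with ((q * q) ^ Z.abs_nat j * / (q * q) ^ Z.abs_nat k)
    by (rewrite !Rpow_mult_distr; field; lra).
  rewrite q_sq, <- pow_inv, <- Rmult_assoc, <- Rpow_mult_distr.
  f_equal; f_equal; field.
Qed.

Lemma transport_small j k h H : (Z.abs k <= Z.of_nat h)%Z -> (h <= H)%nat ->
  (Z.of_nat (p H) <= Z.abs j)%Z ->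
  Cnorm2 (RCmul (pw j / pw k) (tg h k)) <= (/2)^H * Env j.
Proof.
  intros Hk HhH Hj. rewrite Cnorm2_RCmul, pw_ratio_sq.
  set (J := Z.abs_nat j). set (K := Z.abs_nat k).
  assert (HJ : (6/7)^J <= (6/7)^(p H)) by (apply pow_antitone; [lra| unfold J; lia]).
  assert (HK : (4/3)^K * Cnorm2 (tg h k) <= 2 * (16/3)^H).
  { apply Rle_trans with ((4/3)^h * (2 * 4^h)).
    - apply Rmult_le_compat; [apply pow_le; lra|apply Cnorm2_nonneg| |apply tg_bound].
      apply Rle_pow; [lra| unfold K; lia].
    - replace ((4/3)^h * (2 * 4^h)) with (2 * (16/3)^h)
        by (replace (16/3) with (4/3*4) by lra; rewrite Rpow_mult_distr; ring).
      pose proof (Rle_pow (16/3) h H ltac:(lra) HhH). lra. }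
  pose proof (window_decay H). pose proof (Env_pos j). pose proof (Cnorm2_nonneg (tg h k)).
  pose proof (pow_le (6/7) J ltac:(lra)). pose proof (pow_le (4/3) K ltac:(lra)).
  assert ((6/7)^J * ((4/3)^K * Cnorm2 (tg h k)) <= (/2)^H).
  { eapply Rle_trans; [|eassumption].
    apply Rmult_le_compat; auto; apply Rmult_le_pos; auto. }
  replace (Env j * ((6 / 7) ^ J * (4 / 3) ^ K) * Cnorm2 (tg h k))
    with (Env j * ((6/7)^J * ((4/3)^K * Cnorm2 (tg h k)))) by ring.
  rewrite (Rmult_comm ((/2)^H)). apply Rmult_le_compat_l; lra.
Qed.

Definition planted (h : nat) (i : Z) : Defs.C :=
  RCmul (pw i / pw (i + 2 * Z.of_nat (p h))%Z) (tg h (i + 2 * Z.of_nat (p h))%Z).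

Definition X (i : Z) : Defs.C :=
  match excluded_middle_informative (exists h, InWin h i) with
  | left H => planted (proj1_sig (constructive_indefinite_description _ H)) i
  | right _ => Czero
  end.

Lemma X_on_window h i : InWin h i -> X i = planted h i.
Proof.
  intros Hh. unfold X. destruct excluded_middle_informative as [H|H].
  - destruct (constructive_indefinite_description _ H) as [h' Hh']. simpl.
    now rewrite (windows_disjoint h' h i).
  - exfalso; apply H; eauto.
Qed.

Lemma X_off_windows i : ~ (exists h, InWin h i) -> X i = Czero.
Proof.
  intros Hn. unfold X. destruct excluded_middle_informative; [contradiction|reflexivity].
Qed.

Lemma X_bound i : Cnorm2 (X i) <= Env i.
Proof.
  pose proof (Env_pos i).
  destruct (classic (exists h, InWin h i)) as [[h Hh]|Hn].
  - rewrite (X_on_window h i Hh). unfold planted.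
    set (k := (i + 2 * Z.of_nat (p h))%Z).
    destruct (Z_le_gt_dec (Z.abs k) (Z.of_nat h)) as [Hk|Hk].
    + eapply Rle_trans; [apply (transport_small i k h h); [assumption|lia|]|].
      { replace i with (k - 2 * Z.of_nat (p h))%Z by (unfold k; lia). now apply window_far. }
      pose proof (pow_antitone (/2) h 0 ltac:(lra) ltac:(lia)). simpl in *. nra.
    + rewrite (tg_out h k), RCmul_0 by lia. unfold Cnorm2, Czero; simpl. lra.
  - rewrite (X_off_windows i Hn). unfold Cnorm2, Czero; simpl. lra.
Qed.

Lemma X_in_l2 : in_l2 X.
Proof.
  destruct (sumZ_bounded (fun k => Cnorm2 (X k)) (fun _ => Cnorm2_nonneg _) 15) as [l [Hl _]].
  - intros N. eapply Rle_trans; [apply psumZ_le, X_bound|apply psumZ_Env_le].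
  - now exists l.
Qed.

(** [X] vanishes at even indices, as all targets do and windows are shifted by even amounts. *)
Lemma X_even n : X (2 * n)%Z = Czero.
Proof.
  destruct (classic (exists h, InWin h (2 * n)%Z)) as [[h Hh]|Hn].
  - rewrite (X_on_window h _ Hh). unfold planted.
    replace (2 * n + 2 * Z.of_nat (p h))%Z with (2 * (n + Z.of_nat (p h)))%Z by lia.
    rewrite tg_even. apply RCmul_0.
  - now apply X_off_windows.
Qed.

Definition alpha (g : nat) : Defs.C := ((/ s) ^ (2 * p g), 0).

Lemma alpha_in_disk g : Cnorm2 (alpha g) <= 1.
Proof.
  unfold Cnorm2, alpha; cbn [fst snd]. pose proof s_ge3.
  assert (0 <= / s <= 1).
  { split; [left; apply Rinv_0_lt_compat; lra| rewrite <- Rinv_1; apply Rinv_le_contravar; lra]. }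
  pose proof (pow_antitone (/ s) (2 * p g) 0 H0 ltac:(lia)).
  pose proof (pow_le (/ s) (2 * p g) (proj1 H0)). simpl in *. nra.
Qed.

Definition Zs (g : nat) : seqZ := scal (alpha g) (Nat.iter (2 * p g) Fshift X).

Lemma Zs_formula g j : Zs g j =
  RCmul (pw j / pw (j - 2 * Z.of_nat (p g))%Z) (X (j - 2 * Z.of_nat (p g))%Z).
Proof.
  unfold Zs, scal, alpha. rewrite iter_Fshift_formula.
  replace (Z.of_nat (2 * p g)) with (2 * Z.of_nat (p g))%Z by lia.
  set (c := pw j / pw (j - 2 * Z.of_nat (p g))%Z). set (v := X _).
  pose proof s_ge3.
  assert (Hcancel : (/ s) ^ (2 * p g) * s ^ (2 * p g) = 1).
  { rewrite <- Rpow_mult_distr, Rinv_l by lra. apply pow1. }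
  unfold Cmul, RCmul; cbn [fst snd]. f_equal.
  - rewrite <- (Rmult_1_l (c * fst v)), <- Hcancel. ring.
  - rewrite <- (Rmult_1_l (c * snd v)), <- Hcancel. ring.
Qed.

Lemma Zs_cases g j : Zs g j = tg g j \/
  (tg g j = Czero /\ Cnorm2 (Zs g j) <= (/2)^g * Env j).
Proof.
  rewrite Zs_formula. set (i := (j - 2 * Z.of_nat (p g))%Z).
  assert (Htg0 : ~ InWin g i -> tg g j = Czero).
  { intros Hn. apply tg_out. unfold InWin, i in Hn. lia. }
  destruct (classic (exists h, InWin h i)) as [[h Hh]|Hn].
  - rewrite (X_on_window h i Hh). unfold planted. rewrite RCmul_RCmul.
    set (k := (i + 2 * Z.of_nat (p h))%Z).
    replace (pw j / pw i * (pw i / pw k)) with (pw j / pw k)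
      by (pose proof (pw_pos i); pose proof (pw_pos k); field; lra).
    destruct (Nat.eq_dec h g) as [->|Hne].
    + left. replace k with j by (unfold k, i; lia).
      pose proof (pw_pos j). replace (pw j / pw j) with 1 by (field; lra). apply RCmul_1.
    + right. split; [apply Htg0; intros Hg; apply Hne; eapply windows_disjoint; eauto|].
      pose proof (Env_pos j).
      destruct (Z_le_gt_dec (Z.abs k) (Z.of_nat h)) as [Hk|Hk].
      * eapply Rle_trans; [apply (transport_small j k h (Nat.max g h)); [assumption|lia|]|].
        { replace j with (k + 2 * Z.of_nat (p g) - 2 * Z.of_nat (p h))%Z by (unfold k, i; lia).
          apply window_shift_far; auto. }
        pose proof (pow_antitone (/2) (Nat.max g h) g ltac:(lra) ltac:(lia)). nra.
      * rewrite (tg_out h k), RCmul_0 by lia. unfold Cnorm2, Czero; simpl.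
        pose proof (pow_le (/2) g ltac:(lra)). nra.
  - left. rewrite (X_off_windows i Hn), RCmul_0. symmetry.
    apply Htg0. intros Hg; apply Hn; eauto.
Qed.

Lemma Zs_near_tg g k : Cnorm2 (Csub (Zs g k) (tg g k)) <= (/2)^g * Env k.
Proof.
  pose proof (Env_pos k). pose proof (pow_le (/2) g ltac:(lra)).
  destruct (Zs_cases g k) as [->|[-> Hb]].
  - replace (Cnorm2 (Csub (tg g k) (tg g k))) with 0
      by (destruct (tg g k); unfold Cnorm2, Csub; simpl; ring). nra.
  - now rewrite Cnorm2_sub0.
Qed.

Lemma psumZ_Zs_near_tg g N :
  psumZ (fun k => Cnorm2 (Csub (Zs g k) (tg g k))) N <= 15 * (/2)^g.
Proof.
  eapply Rle_trans; [apply psumZ_le; intros k; apply Zs_near_tg|].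
  rewrite psumZ_scal. pose proof (psumZ_Env_le N). pose proof (pow_le (/2) g ltac:(lra)). nra.
Qed.

(** [Zs g] lies in [M]: it is [l^2]-close to the finitely supported [tg g], and the
    transport by an even number of steps preserves vanishing at even indices. *)
Lemma Zs_inM g : inM (Zs g).
Proof.
  split.
  - assert (Htg : sumZ_is (fun k => Cnorm2 (Csub (tg g k) Czero))
                          (psumZ (fun k => Cnorm2 (Csub (tg g k) Czero)) g)).
    { apply sumZ_finite. intros j Hj. rewrite tg_out by lia. unfold Cnorm2, Csub, Czero; simpl; ring. }
    destruct (sumZ_bounded (fun k => Cnorm2 (Zs g k)) (fun _ => Cnorm2_nonneg _)
                (2 * (15 * (/2)^g) + 2 * psumZ (fun k => Cnorm2 (Csub (tg g k) Czero)) g))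
      as [l [Hl _]]; [|now exists l].
    intros N. rewrite (psumZ_ext_loc _ (fun k => Cnorm2 (Csub (Zs g k) Czero)))
      by (intros; now rewrite Cnorm2_sub0).
    eapply Rle_trans; [apply (psumZ_Csub_tri _ (tg g))|].
    pose proof (psumZ_Zs_near_tg g N).
    pose proof (psumZ_le_lim _ (fun _ => Cnorm2_nonneg _) _ N Htg). lra.
  - intros n. rewrite Zs_formula.
    replace (2 * n - 2 * Z.of_nat (p g))%Z with (2 * (n - Z.of_nat (p g)))%Z by lia.
    rewrite X_even. apply RCmul_0.
Qed.

(** Given [y] in [M], pick a target [tg g] close to [y] with [g] so large that
    the normalised orbit [Zs g] is close to [tg g]. *)
Lemma F_diskcyclic : M_diskcyclic Fshift inM.
Proof.
  exists X. split; [exact X_in_l2|]. intros y Hy eps Heps.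
  set (e := eps * eps / 8). assert (He : 0 < e) by (unfold e; nra).
  destruct (pow_lt_1_zero (/2) ltac:(rewrite Rabs_right; lra) (e / 15) ltac:(lra)) as [B HB].
  destruct (tg_dense y e B Hy He) as [g [HgB Hg]].
  specialize (HB g HgB). rewrite Rabs_right in HB by (apply Rle_ge, pow_le; lra).
  exists (alpha g), (2 * p g)%nat.
  change (scal (alpha g) (Nat.iter (2 * p g) Fshift X)) with (Zs g).
  split; [apply alpha_in_disk|]. split; [apply Zs_inM|].
  apply (l2dist_lt_of_bound _ _ (2 * (15 * (/2)^g) + 2 * e)); [exact Heps| |].
  { assert (eps * eps = 8 * e) by (unfold e; field). lra. }
  intros N. eapply Rle_trans; [apply (psumZ_Csub_tri _ (tg g))|].
  pose proof (psumZ_Zs_near_tg g N). pose proof (Hg N). lra.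
Qed.

Theorem mainTheorem8 : M_diskcyclic Fshift inM /\ ~ M_hypercyclic Fshift inM.
Proof. exact (conj F_diskcyclic F_not_hypercyclic). Qed.
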